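(* Let $(\mathcal L,\mathcal B)$ be a separation pair such that every module in $\mathcal B$ is strict $\langle\mathcal L\rangle$-atomic (this holds, e.g., if all modules in $\mathcal B$ are countably generated). Then every strict $\mathcal L$-atomic module in $\mathrm{PGen}\,\mathcal B$ is strict $\langle\mathcal L\rangle$-atomic.
   Context: $R$ is a ring with $1$; modules are left $R$-modules. pp formulas as usual; $\phi\le_{\mathcal L}\psi$ means $\phi(L)\subseteq\psi(L)$ for all $L\in\mathcal L$; $\langle\mathcal L\rangle$ is the definable subcategory generated by $\mathcal L$ (modules $N$ with $\phi(N)\subseteq\psi(N)$ whenever $\phi\le_{\mathcal L}\psi$). For a class $\mathcal X$, $(M,\bar m)$ is an $\mathcal X$-free realization of pp $\phi$ if $\bar m\in\phi(M)$ and for all $X\in\mathcal X$, $\bar c\in\phi(X)$ there is a homomorphism $M\to X$ with $\bar m\mapsto\bar c$; $M$ is strict $\mathcal X$-atomic if every finite tuple is an $\mathcal X$-free realization of some pp formula. A homomorphism $g:B\to C$ is an $\mathcal L$-pure epimorphism if for every tuple $\bar c$ in $C$ and pp $\phi$ with $\bar c\in\phi(C)$ there are a $g$-preimage $\bar b$ and pp $\psi\le_{\mathcal L}\phi$ with $\bar b\in\psi(B)$. A separation pair is a pair $(\mathcal L,\mathcal B)$ of classes with $\mathcal B\subseteq\mathcal L$, $\mathcal L$ closed under direct sums and $\mathcal L$-pure epimorphic images, and $\mathcal B$ a class of strict $\mathcal L$-atomic modules containing only a set of isomorphism types and closed under finite direct sums. $\mathrm{PGen}\,\mathcal B$ is the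 class of pure-epimorphic images of direct sums of modules from $\mathcal B$. *)

From HB Require Import structures.
From mathcomp Require Import all_boot all_order all_algebra.

Set Implicit Arguments.
Unset Strict Implicit.
Unset Printing Implicit Defensive.

Import GRing.Theory.
Local Open Scope ring_scope.

Definition modclass (R : pzRingType) := lmodType R -> Prop.

Definition is_hom (R : pzRingType) (M N : lmodType R) (f : M -> N) : Prop :=
  (forall x y : M, f (x + y) = f x + f y) /\ (forall (r : R) (x : M), f (r *: x) = r *: f x).

(* A pp formula in n free variables x_1..x_n:
     exists y_1..y_m, /\_{i<k} (sum_j A_ij x_j + sum_l B_il y_l = 0). *)
Record ppf (R : pzRingType) (n : nat) := PPF {
  pp_m : nat;
  pp_k : nat;
  pp_A : 'M[R]_(pp_k, n);
  pp_B : 'M[R]_(pp_k, pp_m) }.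

Definition pp_sat (R : pzRingType) (n : nat) (M : lmodType R) (phi : ppf R n)
    (x : 'I_n -> M) : Prop :=
  exists y : 'I_(pp_m phi) -> M,
    forall i : 'I_(pp_k phi),
      \sum_(j < n) pp_A phi i j *: x j + \sum_(l < pp_m phi) pp_B phi i l *: y l = 0.

Definition pp_le (R : pzRingType) (L : modclass R) (n : nat) (phi psi : ppf R n) : Prop :=
  forall M : lmodType R, L M -> forall x : 'I_n -> M, pp_sat phi x -> pp_sat psi x.

(* <L> : the definable subcategory generated by L *)
Definition defgen (R : pzRingType) (L : modclass R) : modclass R :=
  fun N => forall (n : nat) (phi psi : ppf R n), pp_le L phi psi ->
    forall x : 'I_n -> N, pp_sat phi x -> pp_sat psi x.

Definition free_realization (R : pzRingType) (X : modclass R) (M : lmodType R)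
    (n : nat) (m : 'I_n -> M) (phi : ppf R n) : Prop :=
  pp_sat phi m /\
  forall (Y : lmodType R), X Y -> forall c : 'I_n -> Y, pp_sat phi c ->
    exists f : M -> Y, is_hom f /\ forall j, f (m j) = c j.

Definition strict_atomic (R : pzRingType) (X : modclass R) (M : lmodType R) : Prop :=
  forall (n : nat) (m : 'I_n -> M), exists phi : ppf R n, free_realization X m phi.

Definition L_pure_epi (R : pzRingType) (L : modclass R) (B C : lmodType R) (g : B -> C) : Prop :=
  is_hom g /\
  forall (n : nat) (c : 'I_n -> C) (phi : ppf R n), pp_sat phi c ->
    exists (b : 'I_n -> B) (psi : ppf R n),
      (forall j, g (b j) = c j) /\ pp_le L psi phi /\ pp_sat psi b.

Definition pure_epi (R : pzRingType) (B C : lmodType R) (g : B -> C) : Prop :=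
  is_hom g /\
  forall (n : nat) (c : 'I_n -> C) (phi : ppf R n), pp_sat phi c ->
    exists b : 'I_n -> B, (forall j, g (b j) = c j) /\ pp_sat phi b.

Definition is_direct_sum (R : pzRingType) (I : Type) (M : I -> lmodType R)
    (D : lmodType R) (e : forall i, M i -> D) : Prop :=
  (forall i, is_hom (e i)) /\
  forall (X : lmodType R) (f : forall i, M i -> X), (forall i, is_hom (f i)) ->
    exists g : D -> X, [/\ is_hom g, (forall i x, g (e i x) = f i x) &
      forall g' : D -> X, is_hom g' -> (forall i x, g' (e i x) = f i x) ->
        forall d, g' d = g d].

Definition closed_dsum (R : pzRingType) (L : modclass R) : Prop :=
  forall (I : Type) (M : I -> lmodType R) (D : lmodType R) (e : forall i, M i -> D),
    (forall i, L (M i)) -> @is_direct_sum R I M D e -> L D.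

Definition closed_fin_dsum (R : pzRingType) (L : modclass R) : Prop :=
  forall (I : finType) (M : I -> lmodType R) (D : lmodType R) (e : forall i, M i -> D),
    (0 < #|I|)%N -> (forall i, L (M i)) -> @is_direct_sum R I M D e -> L D.

Definition closed_L_pure_epi_images (R : pzRingType) (L : modclass R) : Prop :=
  forall (B C : lmodType R) (g : B -> C), L B -> L_pure_epi L g -> L C.

Definition iso (R : pzRingType) (M N : lmodType R) : Prop :=
  exists (f : M -> N) (h : N -> M), [/\ is_hom f, is_hom h, cancel f h & cancel h f].

(* the class contains only a set of isomorphism types *)
Definition small_class (R : pzRingType) (B : modclass R) : Prop :=
  exists (J : Type) (F : J -> lmodType R), forall M, B M -> exists j, iso M (F j).

Definition separation_pair (R : pzRingType) (L B : modclass R) : Prop :=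
  ((forall M, B M -> L M) /\ closed_dsum L /\ closed_L_pure_epi_images L) /\
  ((forall M, B M -> strict_atomic L M) /\ small_class B /\ closed_fin_dsum B).

Definition PGen (R : pzRingType) (B : modclass R) : modclass R :=
  fun C => exists (I : Type) (M : I -> lmodType R) (D : lmodType R)
    (e : forall i, M i -> D) (g : D -> C),
    [/\ (forall i, B (M i)), @is_direct_sum R I M D e & pure_epi g].

(* Let g : D -> M be a pure epimorphism from a direct sum D of modules of B
   and m a tuple of M, freely realizing some phi with respect to L.  Purity
   lifts m to a tuple d of D satisfying phi; as D lies in L, freeness gives a
   map f : M -> D with m |-> d.  Every element of a direct sum has finite
   support, so d lies in a finite subsum Y, which is in B: there are maps
   sg : Y -> D and rh : D -> Y with sg (rh d) = d.  If y := rh d freely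
   realizes psi over <L>, then so does m, because y and m are mapped to each
   other by (g o sg) and (rh o f) (lemma [free_realization_transfer]). *)

From HB Require Import structures.
From mathcomp Require Import all_boot all_order all_algebra.
From Stdlib Require Import ClassicalEpsilon Eqdep.

Set Implicit Arguments.
Unset Strict Implicit.
Unset Printing Implicit Defensive.

Import GRing.Theory.
Local Open Scope ring_scope.

Section Homomorphisms.
Variable R : pzRingType.
Implicit Types M N P : lmodType R.

Lemma hom0 M N (f : M -> N) : is_hom f -> f 0 = 0.
Proof. by move=> [fD _]; apply: (addrI (f 0)); rewrite -fD !addr0. Qed.

Lemma hom_sum M N (f : M -> N) : is_hom f -> forall k (F : 'I_k -> M),
  f (\sum_(i < k) F i) = \sum_(i < k) f (F i).
Proof. by move=> hf k F; apply: (big_morph f hf.1 (hom0 hf)). Qed.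

Lemma hom_id M : is_hom (fun x : M => x).
Proof. by []. Qed.

Lemma hom_zero M N : is_hom (fun _ : M => (0 : N)).
Proof. by split=> *; rewrite ?addr0 ?scaler0. Qed.

Lemma hom_comp M N P (f : M -> N) (g : N -> P) :
  is_hom f -> is_hom g -> is_hom (fun x => g (f x)).
Proof. by move=> [fD fZ] [gD gZ]; split=> *; rewrite ?fD ?gD ?fZ ?gZ. Qed.

Lemma hom_sub M N (f g : M -> N) : is_hom f -> is_hom g -> is_hom (fun z => f z - g z).
Proof.
move=> [fD fZ] [gD gZ]; split=> *; rewrite ?fD ?gD ?fZ ?gZ; first by rewrite opprD addrACA.
by rewrite scalerBr.
Qed.

Lemma hom_pair M N1 N2 (f1 : M -> N1) (f2 : M -> N2) :
  is_hom f1 -> is_hom f2 -> is_hom (fun z => ((f1 z, f2 z) : (N1 * N2)%type)).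
Proof. by move=> [fD fZ] [gD gZ]; split=> *; rewrite ?fD ?gD ?fZ ?gZ. Qed.

Lemma hom_copair M1 M2 N (f1 : M1 -> N) (f2 : M2 -> N) :
  is_hom f1 -> is_hom f2 -> is_hom (fun p : (M1 * M2)%type => f1 p.1 + f2 p.2).
Proof.
move=> [fD fZ] [gD gZ]; split=> [[a b] [c d]|r [a b]] /=; first by rewrite fD gD addrACA.
by rewrite fZ gZ scalerDr.
Qed.

Lemma hom_pp M N (f : M -> N) : is_hom f -> forall n (phi : ppf R n) x,
  pp_sat phi x -> pp_sat phi (fun j => f (x j)).
Proof.
move=> hf n phi x [y Hy]; exists (fun l => f (y l)) => i.
rewrite -[RHS](hom0 hf) -(Hy i) hf.1 !(hom_sum hf).
by congr (_ + _); apply: eq_bigr => *; rewrite hf.2.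
Qed.

End Homomorphisms.

Lemma pp_ext (R : pzRingType) (M : lmodType R) n (phi : ppf R n) (x x' : 'I_n -> M) :
  (forall j, x j = x' j) -> pp_sat phi x -> pp_sat phi x'.
Proof.
move=> E [y Hy]; exists y => i; rewrite -[RHS](Hy i).
by congr (_ + _); apply: eq_bigr => j _; rewrite E.
Qed.

Definition pp_zero (R : pzRingType) n : ppf R n := @PPF R n 0 n 1%:M 0.

Lemma pp_zeroP (R : pzRingType) (M : lmodType R) n (c : 'I_n -> M) :
  pp_sat (pp_zero R n) c <-> forall j, c j = 0.
Proof.
split=> [[y Hy] j | c0].
  rewrite -(Hy j) big_ord0 addr0 /= (bigD1 j) //= mxE eqxx scale1r.
  by rewrite big1 ?addr0 // => k kj; rewrite mxE eq_sym (negbTE kj) mulr0n scale0r.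
by exists (fun _ => 0) => i; rewrite big_ord0 addr0 big1 // => j _; rewrite c0 scaler0.
Qed.

Lemma zero_free_realization (R : pzRingType) (X : modclass R) (M : lmodType R) n
    (m : 'I_n -> M) :
  (forall j, m j = 0) -> free_realization X m (pp_zero R n).
Proof.
move=> m0; split; first exact/pp_zeroP.
move=> N _ c /pp_zeroP c0; exists (fun _ => 0); split; first exact: hom_zero.
by move=> j; rewrite c0.
Qed.

Lemma free_realization_transfer (R : pzRingType) (X : modclass R) (Y M : lmodType R)
    n (y : 'I_n -> Y) (m : 'I_n -> M) (psi : ppf R n) (u : Y -> M) (v : M -> Y) :
  is_hom u -> is_hom v -> (forall j, u (y j) = m j) -> (forall j, v (m j) = y j) ->
  free_realization X y psi -> free_realization X m psi.
Proof.
move=> hu hv uy vm [psiy freey]; split; first exact: pp_ext uy (hom_pp hu psiy).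
move=> N XN c psic; have [h [hh hy]] := freey N XN c psic.
by exists (fun z => h (v z)); split; [exact: hom_comp hv hh | move=> j; rewrite vm hy].
Qed.

Definition prop_bool (P : Prop) : bool :=
  if excluded_middle_informative P then true else false.

Lemma prop_boolP (P : Prop) : reflect P (prop_bool P).
Proof. by rewrite /prop_bool; case: excluded_middle_informative => H; constructor. Qed.

Section DirectSum.
Variables (R : pzRingType) (I : Type) (Mf : I -> lmodType R) (D : lmodType R).
(* The injections take their index explicitly. *)
Unset Implicit Arguments.
Variable e : forall i, Mf i -> D.
Set Implicit Arguments.
Hypothesis hD : @is_direct_sum R I Mf D e.

Lemma inj_hom i : is_hom (e i). Proof. exact: hD.1. Qed.

Lemma dsum_hom_ext (X : lmodType R) (g1 g2 : D -> X) : is_hom g1 -> is_hom g2 ->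
  (forall i x, g1 (e i x) = g2 (e i x)) -> forall z, g1 z = g2 z.
Proof.
move=> h1 h2 E z.
have [g [_ _ U]] := hD.2 X (fun i x => g2 (e i x)) (fun i => hom_comp (inj_hom i) h2).
by rewrite (U g1 h1 E) (U g2 h2 (fun _ _ => erefl)).
Qed.

Definition delta i j : Mf j -> Mf i :=
  match excluded_middle_informative (j = i) with
  | left E => fun x => eq_rect j Mf x i E
  | right _ => fun _ => 0
  end.
Arguments delta : clear implicits.

Lemma delta_hom i j : is_hom (delta i j).
Proof.
rewrite /delta; case: excluded_middle_informative => [E|_]; last exact: hom_zero.
by case: i / E.
Qed.

Definition proj i : D -> Mf i :=
  proj1_sig (constructive_indefinite_description _ (hD.2 (Mf i) (delta i) (delta_hom i))).

Lemma proj_spec i : is_hom (proj i) /\ forall j x, proj i (e j x) = delta i j x.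
Proof. by rewrite /proj; case: constructive_indefinite_description => g [hg Hg _] /=. Qed.

Lemma proj_hom i : is_hom (proj i). Proof. exact: (proj_spec i).1. Qed.

Lemma proj_inj i x : proj i (e i x) = x.
Proof.
rewrite (proj_spec i).2 /delta; case: excluded_middle_informative => [E|//].
by rewrite (UIP_refl _ _ E).
Qed.

Lemma proj_inj_ne i j x : j <> i -> proj i (e j x) = 0.
Proof. by move=> nji; rewrite (proj_spec i).2 /delta; case: excluded_middle_informative. Qed.

Definition fixes (P : D -> D) (s : seq I) :=
  forall i, List.In i s -> forall x, P (e i x) = e i x.

Lemma fixes_catl P s1 s2 : fixes P (s1 ++ s2) -> fixes P s1.
Proof. by move=> fx i Hi; apply: fx; apply: List.in_or_app; left. Qed.

Lemma fixes_catr P s1 s2 : fixes P (s1 ++ s2) -> fixes P s2.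
Proof. by move=> fx i Hi; apply: fx; apply: List.in_or_app; right. Qed.

Definition fin_supp (z : D) :=
  exists s, forall P, is_hom P -> fixes P s -> P z = z.

Lemma fin_supp_inj i x : fin_supp (e i x).
Proof. by exists [:: i] => P _ fx; apply: fx; left. Qed.

Definition fin_supp_pred : {pred D} := fun z => prop_bool (fin_supp z).

Lemma fin_supp_submod_closed : GRing.submod_closed fin_supp_pred.
Proof.
split; first by apply/prop_boolP; exists [::] => P hP _; apply: hom0.
move=> a u v /prop_boolP [s1 H1] /prop_boolP [s2 H2]; apply/prop_boolP.
exists (s1 ++ s2) => P hP fx.
by rewrite hP.1 hP.2 (H1 P hP (fixes_catl fx)) (H2 P hP (fixes_catr fx)).
Qed.

HB.instance Definition _ :=
  GRing.isSubmodClosed.Build R D fin_supp_pred fin_supp_submod_closed.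
Definition FinSupp := {z : D | fin_supp_pred z}.
HB.instance Definition _ := [isSub of FinSupp for @proj1_sig D fin_supp_pred].
HB.instance Definition _ := [Choice of FinSupp by <:].
HB.instance Definition _ := [SubChoice_isSubLmodule of FinSupp by <:].

Definition fin_inj i (x : Mf i) : FinSupp :=
  exist _ (e i x) (introT (prop_boolP _) (fin_supp_inj x)).

Lemma fin_inj_hom i : is_hom (@fin_inj i).
Proof.
split=> *; apply: val_inj; rewrite /= ?GRing.valD ?GRing.valZ /=;
  by rewrite ?(inj_hom i).1 ?(inj_hom i).2.
Qed.

(* Every element of a direct sum has finite support: the map D -> FinSupp
   induced by the injections is a section of the inclusion FinSupp -> D. *)
Lemma fin_supp_all z : fin_supp z.
Proof.
have [h [hh Hh _]] := hD.2 FinSupp fin_inj fin_inj_hom.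
have hv : is_hom (fun z => val (h z)).
  by split=> *; rewrite ?hh.1 ?hh.2 ?GRing.valD ?GRing.valZ.
have E := dsum_hom_ext hv (@hom_id _ D) (fun i x => congr1 val (Hh i x)).
by rewrite -(E z); apply/prop_boolP; apply: valP (h z).
Qed.

Lemma fin_supp_tuple n (d : 'I_n -> D) :
  exists s, forall P, is_hom P -> fixes P s -> forall j, P (d j) = d j.
Proof.
suff [s Hs] : exists s, forall P, is_hom P -> fixes P s ->
    forall z, z \in map d (enum 'I_n) -> P z = z.
  by exists s => P hP fx j; apply: Hs => //; apply: map_f; rewrite mem_enum.
elim: (map d _) => [|z zs [s IH]]; first by exists [::].
have [s1 H1] := fin_supp_all z.
exists (s1 ++ s) => P hP fx w; rewrite inE => /orP [/eqP -> | wzs].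
  exact: H1 hP (fixes_catl fx).
exact: IH hP (fixes_catr fx) w wzs.
Qed.

End DirectSum.

Section FiniteSubsums.
Variable R : pzRingType.

Definition bool_family (Y1 Y2 : lmodType R) (b : bool) : lmodType R :=
  if b then Y1 else Y2.

Definition bool_inj (Y1 Y2 : lmodType R) (b : bool) :
    bool_family Y1 Y2 b -> (Y1 * Y2)%type :=
  match b with true => fun x => (x, 0) | false => fun x => (0, x) end.
Arguments bool_inj : clear implicits.

Lemma bool_inj_dsum (Y1 Y2 : lmodType R) : @is_direct_sum R bool (bool_family Y1 Y2) _ (bool_inj Y1 Y2).
Proof.
split; first by case; split=> * /=; congr (_, _); rewrite ?addr0 ?scaler0.
move=> X f hf; exists (fun p => f true p.1 + f false p.2); split.
- exact: hom_copair (hf true) (hf false).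
- by case=> x /=; rewrite (hom0 (hf false), hom0 (hf true)) ?addr0 ?add0r.
- move=> g' hg' Hg' [a b].
  have -> : g' (a, b) = g' (bool_inj Y1 Y2 true a + bool_inj Y1 Y2 false b).
    by congr g'; congr (_, _); rewrite /= ?addr0 ?add0r.
  by rewrite hg'.1 !Hg'.
Qed.

Lemma closed_fin_dsum_prod (Bc : modclass R) (Y1 Y2 : lmodType R) :
  closed_fin_dsum Bc -> Bc Y1 -> Bc Y2 -> Bc (Y1 * Y2)%type.
Proof.
move=> cl h1 h2; apply: (cl bool _ _ (bool_inj Y1 Y2)) (bool_inj_dsum Y1 Y2).
- by rewrite card_bool.
- by case.
Qed.

Variables (Bc : modclass R) (I : Type) (Mf : I -> lmodType R) (D : lmodType R).
Unset Implicit Arguments.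
Variable e : forall i, Mf i -> D.
Set Implicit Arguments.
Hypotheses (hD : @is_direct_sum R I Mf D e) (clB : closed_fin_dsum Bc).
Hypothesis BMf : forall i, Bc (Mf i).

Lemma finite_subsum_retract (a : I) (s : seq I) :
  exists (Y : lmodType R) (sg : Y -> D) (rh : D -> Y),
    [/\ Bc Y, is_hom sg, is_hom rh & fixes e (fun z => sg (rh z)) (a :: s)].
Proof.
elim: s a => [|b s IH] a; have hpa := proj_hom hD a; have hea := inj_hom hD a.
  exists (Mf a), (e a), (proj hD a); split=> //.
  by move=> i [<-|[]] x; rewrite proj_inj.
have [Y [sg [rh [BY hsg hrh fx]]]] := IH b.
exists (Y * Mf a)%type, (fun p => sg p.1 + e a p.2),
  (fun z => (rh (z - e a (proj hD a z)), proj hD a z)); split.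
- exact: closed_fin_dsum_prod.
- exact: hom_copair.
- exact/hom_pair/hpa/(hom_comp _ hrh)/(hom_sub (@hom_id _ D))/(hom_comp hpa hea).
- move=> i Hi x /=; case: (excluded_middle_informative (i = a)) => [Eia|nia].
    by subst i; rewrite proj_inj subrr (hom0 hrh) (hom0 hsg) add0r.
  rewrite proj_inj_ne // (hom0 hea) subr0 addr0; apply: fx.
  by case: Hi => // Eai; case: nia.
Qed.

Lemma dsum_tuple_retract n (d : 'I_n -> D) :
  (forall j, d j = 0) \/
  exists (Y : lmodType R) (sg : Y -> D) (rh : D -> Y),
    [/\ Bc Y, is_hom sg, is_hom rh & forall j, sg (rh (d j)) = d j].
Proof.
have [[|a s] Hs] := fin_supp_tuple hD d.
  by left=> j; rewrite -(Hs _ (hom_zero _ _)).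
have [Y [sg [rh [BY hsg hrh fx]]]] := finite_subsum_retract a s.
by right; exists Y, sg, rh; split=> // j; exact: Hs (hom_comp hrh hsg) fx j.
Qed.

End FiniteSubsums.

Theorem proposition7p1 (R : pzRingType) (L B : modclass R) :
  separation_pair L B ->
  (forall M, B M -> strict_atomic (defgen L) M) ->
  forall M : lmodType R, PGen B M -> strict_atomic L M -> strict_atomic (defgen L) M.
Proof.
move=> [[BL [cds _]] [_ [_ clB]]] Bat M [I [Mf [D [e [g [BMf hD hg]]]]]] Matom n m.
have [phi [phim freem]] := Matom n m.
have [d [gd phid]] := hg.2 n m phi phim.
have LD : L D := cds I Mf D e (fun i => BL _ (BMf i)) hD.
have [f [hf fm]] := freem D LD d phid.
case: (dsum_tuple_retract hD clB BMf d) => [d0 | [Y [sg [rh [BY hsg hrh sgrh]]]]].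
  exists (pp_zero R n); apply: zero_free_realization => j.
  by rewrite -gd d0 (hom0 hg.1).
have [psi freey] := Bat Y BY n (fun j => rh (d j)).
exists psi; apply: free_realization_transfer (hom_comp hsg hg.1) (hom_comp hf hrh) _ _ freey.
- by move=> j; rewrite sgrh gd.
- by move=> j; rewrite fm.
Qed.
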